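(* Let $X\subset\operatorname{Hol}(\mathbb{D})$ be a Banach space such that (X1) for each $w\in\mathbb{D}$ the map $f\mapsto f(w)$, $X\to\mathbb{C}$, is continuous; (X2) $X$ contains the polynomials and they are dense in $X$; (X3) if $f\in X$ then $zf\in X$. Let $Y\subset X$ be a set such that (Y1) if $g\in X$ and $0<\inf_{\mathbb{D}}|g|\le\sup_{\mathbb{D}}|g|<\infty$, then $g\in Y$; (Y2) for every $\lambda\in\mathbb{T}$, the function $g(z):=z-\lambda$ belongs to $Y$. Let $T:X\to\operatorname{Hol}(\mathbb{D})$ be a continuous linear map such that $(Tg)(z)\neq0$ for all $g\in Y$ and all $z\in\mathbb{D}$. Then there exist holomorphic functions $\phi:\mathbb{D}\to\mathbb{D}$ and $\psi:\mathbb{D}\to\mathbb{C}\setminus\{0\}$ such that \[ Tf=\psi\cdot(f\circ\phi)\qquad(f\in X). \]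
   Context: $\mathbb{D}$ is the open unit disk, $\mathbb{T}$ the unit circle, and $\operatorname{Hol}(\mathbb{D})$ the space of holomorphic functions on $\mathbb{D}$, endowed with its usual Fréchet-space topology (uniform convergence on compact subsets of $\mathbb{D}$); continuity of $T$ refers to the norm topology on $X$ and this topology on $\operatorname{Hol}(\mathbb{D})$. *)

From HB Require Import structures.
From mathcomp Require Import all_boot all_order all_algebra.
From mathcomp Require Import all_classical all_reals all_analysis.
From mathcomp Require Import complex.
Unset Printing Implicit Defensive.
Import Order.TTheory GRing.Theory Num.Theory.
Import numFieldNormedType.Exports.
Local Open Scope ring_scope.
Local Open Scope classical_set_scope.

(* The complex numbers C = R[i] over a real field R : realType, seen as a
   numClosedFieldType; MathComp-Analysis then equips it with its usual
   (norm) topology and with its structure of normed C-vector space. *)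
Definition CC (R : realType) : numClosedFieldType := Num.ClosedField.clone R[i] _.

Definition disk (R : realType) : set (CC R) := [set z | `|z| < 1].
Definition circle (R : realType) : set (CC R) := [set z | `|z| = 1].

(* f is holomorphic on D: complex-differentiable (derivative in direction 1,
   C viewed as a normed space over itself) at every point of D.  Elements of
   Hol(D) are represented by functions C -> C, only their values on D matter. *)
Definition holo_on_disk {R : realType} (f : CC R -> CC R) : Prop :=
  forall z, disk R z -> derivable f z 1.

(* Continuity of a map T : X -> Hol(D) at every point, where Hol(D) carries
   the topology of uniform convergence on compact subsets of D (a basic
   neighbourhood of h is {k | sup_K |k - h| < eps}, K compact in D). *)
Definition continuous_to_Hol {R : realType} {X : normedModType (CC R)}
    (T : X -> CC R -> CC R) : Prop :=
  forall (f : X) (K : set (CC R)), compact K -> K `<=` disk R ->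
  forall eps : CC R, 0 < eps -> exists2 delta : CC R, 0 < delta &
    forall g : X, `|g - f| < delta ->
      forall z, K z -> `|T g z - T f z| < eps.

From HB Require Import structures.
From mathcomp Require Import all_boot all_order all_algebra.
From mathcomp Require Import all_classical all_reals all_analysis.
From mathcomp Require Import complex.
From mathcomp Require Import ring.
Import Order.TTheory GRing.Theory Num.Theory.
Import numFieldNormedType.Exports.
Local Open Scope ring_scope.
Local Open Scope classical_set_scope.

(* Fix w in D.  Since T 1 (w) <> 0, L p := (T p)(w) / (T 1)(w) is a linear
   functional on polynomials with L 1 = 1 which does not vanish on polynomials
   bounded and bounded away from 0 on D.  If |q| <= M on D, the polynomial
   F(mu) = L((1 + mu q)^n) has therefore no root in |mu| < 1/M, so the sum of
   the squares of its inverse roots, n^2 L(q)^2 - n(n-1) L(q^2), has modulus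
   at most n M^2; letting n grow gives L(q^2) = L(q)^2 (Gleason-Kahane-Zelazko).
   By polarization L is multiplicative, i.e. L p = p(phi(w)) with
   phi(w) = L(z), and |phi(w)| < 1 because L(z - lambda) <> 0 for |lambda| = 1
   while z - lambda is invertible in H^oo(D) for |lambda| > 1.  Density of the
   polynomials, with continuity of T and of the point evaluations, extends
   (T f)(w) = (T 1)(w) f(phi(w)) to all of X. *)

Lemma bin2_mul2 n : ('C(n, 2) * 2 = n * n.-1)%N.
Proof.
rewrite bin2 muln2 halfK; case: n => [|n] //=.
by rewrite oddM /= andNb subn0.
Qed.

(* Newton: if F = \prod_i (1 - t_i X) then psum2 F = \sum_i t_i ^+ 2. *)
Definition psum2 {C : nzRingType} (F : {poly C}) : C := F`_1 ^+ 2 - F`_2 *+ 2.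

Lemma psum2_mul_1subZX (C : comNzRingType) (H : {poly C}) (t : C) :
  H`_0 = 1 -> psum2 (H * (1 - t *: 'X)) = psum2 H + t ^+ 2.
Proof.
move=> H0; rewrite /psum2 mulrBr mulr1 -scalerAr.
rewrite !(coefB, coefZ, coefMX) /= H0; ring.
Qed.

Lemma coef0_eq1_factor (C : closedFieldType) (F : {poly C}) :
  F`_0 = 1 -> (1 < size F)%N ->
  exists z (H : {poly C}), [/\ root F z, size H = (size F).-1, H`_0 = 1
                & F = H * (1 - z^-1 *: 'X)].
Proof.
move=> F0 sF; have /closed_rootP [z Fz] : size F != 1%N by rewrite gtn_eqF.
have z0 : z != 0.
  by apply: contraTneq Fz => ->; rewrite /root horner_coef0 F0 oner_eq0.
have [G FG] := factor_theorem _ _ Fz.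
have FGz : F = (- z *: G) * (1 - z^-1 *: 'X).
  rewrite FG -scalerAl scalerAr scalerBr scalerA mulNr mulfV // scaleN1r.
  by rewrite opprK alg_polyC polyCN addrC.
have G0 : G != 0 by apply: contraTneq sF => G0; rewrite FG G0 mul0r size_poly0.
exists z, (- z *: G); split=> //.
- rewrite size_scale ?oppr_eq0 // FG size_Mmonic ?monicXsubC //.
  by rewrite size_XsubC addn2.
- by move: F0; rewrite FGz -!horner_coef0 hornerM !hornerE subr0 mulr1.
Qed.

Lemma psum2_le (C : numClosedFieldType) (M : C) n (F : {poly C}) :
  0 <= M -> (size F <= n.+1)%N -> F`_0 = 1 ->
  (forall z, root F z -> 1 <= M * `|z|) -> `|psum2 F| <= n%:R * M ^+ 2.
Proof.
move=> M0; elim: n F => [|n IH] F sF F0 MF.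
  rewrite /psum2 !nth_default ?(leq_trans sF) //.
  by rewrite mul0r expr0n mul0rn subr0 normr0.
have [sFn|sFn] := leqP (size F) n.+1.
  by apply: le_trans (IH F sFn F0 MF) _; rewrite ler_wpM2r ?exprn_ge0 ?ler_nat.
have [z [H [Fz sH H0 FH]]] :=
  @coef0_eq1_factor _ F F0 (leq_ltn_trans (ltn0Sn n) sFn).
have zM : `|z^-1| <= M.
  have Mz := MF z Fz.
  have z0 : 0 < `|z|.
    rewrite normr_gt0; apply: contraTneq Mz => ->.
    by rewrite normr0 mulr0 ler10.
  by rewrite normfV -div1r ler_pdivrMr.
have HF x : root H x -> root F x.
  by rewrite FH /root hornerM => /eqP->; rewrite mul0r.
rewrite FH psum2_mul_1subZX // -natr1 mulrDl mul1r.
apply: le_trans (ler_normD _ _) _; rewrite lerD ?IH //.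
- by rewrite sH -subn1 leq_subLR.
- by move=> x /HF; apply: MF.
- by rewrite normrX lerXn2r // nnegrE.
Qed.

Lemma bounded_natmul_eq0 (R : realType) (u K : CC R) :
  0 <= u -> (forall N, u *+ N <= K) -> u = 0.
Proof.
move=> u0 uK; apply/eqP; apply: contraT => un0.
have : 0 < u by rewrite lt_def un0 u0.
rewrite ltcE => /andP [_ Reu].
have := uK (Num.trunc (complex.Re K / complex.Re u)).+1.
rewrite lecE => /andP [_]; rewrite raddfMn /=.
move=> le; have := truncnS_gt (complex.Re K / complex.Re u).
by rewrite ltr_pdivrMr // mulr_natl ltNge le.
Qed.

Lemma normr_horner_le (C : numDomainType) (q : {poly C}) (z : C) :
  `|z| <= 1 -> `|q.[z]| <= \sum_(i < size q) `|q`_i|.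
Proof.
move=> z1; rewrite horner_coef; apply: le_trans (ler_norm_sum _ _ _) _.
apply: ler_sum => i _; rewrite normrM normrX ler_piMr ?exprn_ile1 //.
Qed.

Definition Hinf_invertible {R : realType} (p : {poly CC R}) : Prop :=
  exists m M : CC R, 0 < m /\ forall z, disk R z -> m <= `|p.[z]| <= M.

Section GleasonKahaneZelazko.
Context {R : realType}.
Local Notation C := (CC R).
Context {L : {poly C} -> C}.
Hypothesis L_linear : linear L.
Hypothesis L1 : L 1 = 1.
Hypothesis L_Hinf_invertible : forall p, Hinf_invertible p -> L p != 0.

HB.instance Definition _ := GRing.isLinear.Build _ _ _ _ L L_linear.

Let binomial_poly (q : {poly C}) n := \poly_(k < n.+1) (L (q ^+ k) *+ 'C(n, k)).

Lemma coef_binomial_poly q n k :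
  (binomial_poly q n)`_k = L (q ^+ k) *+ 'C(n, k).
Proof. by rewrite coef_poly; case: ltnP => // ?; rewrite bin_small ?mulr0n. Qed.

Lemma L_exp1DZ (q : {poly C}) n (mu : C) :
  L ((1 + mu *: q) ^+ n) = (binomial_poly q n).[mu].
Proof.
rewrite horner_poly exprDn linear_sum; apply: eq_bigr => i _.
by rewrite expr1n mul1r exprZn scalerMnr linearZ raddfMn mulrC.
Qed.

Lemma L_exp1DZ_neq0 (q : {poly C}) n (mu : C) :
  `|mu| * \sum_(i < size q) `|q`_i| < 1 -> L ((1 + mu *: q) ^+ n) != 0.
Proof.
set M := \sum_(i < _) _ => muM; apply: L_Hinf_invertible.
have M0 : 0 <= M by rewrite sumr_ge0.
exists ((1 - `|mu| * M) ^+ n), ((1 + `|mu| * M) ^+ n).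
split=> [|z z1]; first by rewrite exprn_gt0 // subr_gt0.
have muq : `|mu * q.[z]| <= `|mu| * M.
  by rewrite normrM ler_wpM2l // normr_horner_le // ltW.
rewrite !hornerE normrX; apply/andP; split; apply: lerXn2r.
- by rewrite nnegrE subr_ge0 ltW.
- by rewrite nnegrE.
- by apply: le_trans (lerB_normD _ _); rewrite normr1 lerD2l lerN2.
- by rewrite nnegrE.
- by rewrite nnegrE addr_ge0 // mulr_ge0.
- by apply: le_trans (ler_normD _ _) _; rewrite normr1 lerD2l.
Qed.

Lemma psum2_binomial_poly_le (q : {poly C}) n :
  `|psum2 (binomial_poly q n)| <= n%:R * (\sum_(i < size q) `|q`_i|) ^+ 2.
Proof.
apply: psum2_le.
- by rewrite sumr_ge0.
- exact: size_poly.
- by rewrite coef_binomial_poly expr0 L1 bin0.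
move=> mu root_mu.
rewrite mulrC real_leNgt ?real1 ?realE ?mulr_ge0 ?sumr_ge0 //.
by apply: contraL root_mu => /(L_exp1DZ_neq0 q n mu); rewrite /root -L_exp1DZ.
Qed.

Lemma L_sqr q : L (q ^+ 2) = L q ^+ 2.
Proof.
set M := \sum_(i < size q) `|q`_i|; set a := L q; set b := L (q ^+ 2).
suff : `|a ^+ 2 - b| = 0 by move/normr0_eq0/eqP; rewrite subr_eq0 => /eqP.
apply: (@bounded_natmul_eq0 R _ (M ^+ 2 + `|b|)) => // -[|N].
  by rewrite mulr0n addr_ge0 ?exprn_ge0 ?sumr_ge0.
have := psum2_binomial_poly_le q N.+1.
have -> : psum2 (binomial_poly q N.+1) = N.+1%:R * (N.+1%:R * (a ^+ 2 - b) + b).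
  rewrite /psum2 !coef_binomial_poly expr1 bin1 -mulrnA -[b *+ _]mulr_natr.
  by rewrite -[a *+ _]mulr_natr bin2_mul2 natrM -!natr1 /=; ring.
rewrite normrM normr_nat ler_pM2l ?ltr0Sn // => h.
rewrite -normrMn -mulr_natl.
apply: le_trans (_ : `|N.+1%:R * (a ^+ 2 - b) + b| + `|b| <= _).
  by rewrite -[X in `|X|](addrK b) ler_normB.
by rewrite lerD2r.
Qed.

Lemma L_mul p q : L (p * q) = L p * L q.
Proof.
have := L_sqr (p + q); rewrite sqrrD !raddfD /= !L_sqr sqrrD -mulr2n.
by move/addIr/addrI/eqP; rewrite eqrMn2r => /eqP.
Qed.

Lemma L_horner p : L p = p.[L 'X].
Proof.
elim/poly_ind: p => [|p c IH]; first by rewrite raddf0 horner0.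
rewrite hornerMXaddC raddfD /= L_mul IH -alg_polyC linearZ -[c in RHS]mulr1.
by congr (_ + c * _).
Qed.

Lemma normr_LX_lt1 : (forall l, `|l| = 1 -> L ('X - l%:P) != 0) -> `|L 'X| < 1.
Proof.
move=> L_circle; set a := L 'X.
have La : L ('X - a%:P) = 0 by rewrite L_horner hornerXsubC subrr.
rewrite real_ltNge ?real1 ?ger0_real //; apply/negP.
rewrite le_eqVlt => /orP [/eqP a1|a_gt1].
  by move: (L_circle a (esym a1)); rewrite La eqxx.
suff /L_Hinf_invertible : Hinf_invertible ('X - a%:P) by rewrite La eqxx.
exists (`|a| - 1), (1 + `|a|); split=> [|z z1]; first by rewrite subr_gt0.
rewrite hornerXsubC; apply/andP; split.
  by rewrite distrC; apply: le_trans (lerB_dist a z); rewrite lerD2l lerN2 ltW.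
by apply: le_trans (ler_normB _ _) _; rewrite lerD2r ltW.
Qed.

End GleasonKahaneZelazko.

Lemma continuous_to_Hol_eval (R : realType) (X : normedModType (CC R))
    (T : X -> CC R -> CC R) (w : CC R) :
  continuous_to_Hol T -> disk R w -> continuous (fun f => T f w).
Proof.
move=> T_cont w1 f; apply/cvgrPdist_lt => e e0.
have w_disk : [set w] `<=` disk R by move=> z ->.
have [d d0 Td] := T_cont f [set w] (@compact_set1 _ w) w_disk e e0.
apply: filterS (nbhsx_ballx f d d0) => g; rewrite -ball_normE /= => fg.
by rewrite distrC Td // distrC.
Qed.

Lemma eq_continuous_dense {T : topologicalType} {K : numFieldType}
    {V : normedModType K} {f g : T -> V} {S : set T} :
  continuous f -> continuous g -> closure S = setT ->
  (forall x, S x -> f x = g x) -> f =1 g.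
Proof.
move=> f_cont g_cont S_dense fg x.
have fg_cont : continuous (f - g).
  by move=> y; exact: (continuousB (f_cont y) (g_cont y)).
have eq_fg : [set x | f x = g x] = (f - g) @^-1` [set 0].
  apply/seteqP; split=> y /=; rewrite !fctE; first by move=> ->; rewrite subrr.
  exact: subr0_eq.
have closed_fg : closed [set x | f x = g x].
  rewrite eq_fg; apply: preimage_closed => [y _|]; first exact: fg_cont.
  exact: (accessible_closed_set1 (hausdorff_accessible (@norm_hausdorff _ V))).
suff /(_ x) : closure S `<=` [set x | f x = g x] by apply; rewrite S_dense.
by rewrite [X in _ `<=` X](closure_id _).1 //; apply: closureS.
Qed.

Section WeightedComposition.
Context {R : realType} {X : normedModType (CC R)} {emb : X -> CC R -> CC R}.
Local Notation C := (CC R).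
Hypothesis emb_lin : forall (a : C) (x y : X) (z : C), disk R z ->
  emb (a *: x + y) z = a * emb x z + emb y z.
Hypothesis emb_inj : forall x y : X,
  (forall z, disk R z -> emb x z = emb y z) -> x = y.
Hypothesis X1 : forall w : C, disk R w -> continuous (fun x : X => emb x w).
Hypothesis X2a : forall p : {poly C}, exists x : X,
  forall z, disk R z -> emb x z = p.[z].
Hypothesis X2b : closure [set x : X | exists p : {poly C},
  forall z, disk R z -> emb x z = p.[z]] = setT.
Context {Y : set X}.
Hypothesis Y1 : forall g : X,
  (exists m M : C, 0 < m /\ forall z, disk R z -> m <= `|emb g z| <= M) -> Y g.
Hypothesis Y2 : forall lambda : C, circle R lambda -> forall g : X,
  (forall z, disk R z -> emb g z = z - lambda) -> Y g.
Context {T : X -> C -> C}.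
Hypothesis T_lin : forall (a : C) (x y : X) (z : C), disk R z ->
  T (a *: x + y) z = a * T x z + T y z.
Hypothesis T_cont : continuous_to_Hol T.
Hypothesis T_nonvanish : forall g : X, Y g -> forall z, disk R z -> T g z != 0.

Definition poly_elt (p : {poly C}) : X := projT1 (cid (X2a p)).

Lemma emb_poly_elt p z : disk R z -> emb (poly_elt p) z = p.[z].
Proof. exact: (projT2 (cid (X2a p))). Qed.

Lemma poly_eltE {x p} :
  (forall z, disk R z -> emb x z = p.[z]) -> x = poly_elt p.
Proof. by move=> xp; apply: emb_inj => z z1; rewrite xp ?emb_poly_elt. Qed.

Definition weight (w : C) : C := T (poly_elt 1) w.

Definition symbol (w : C) : C := T (poly_elt 'X) w / weight w.

Lemma weight_neq0 w : disk R w -> weight w != 0.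
Proof.
move=> w1; apply: T_nonvanish w1; apply: Y1; exists 1, 1; split=> // z z1.
by rewrite emb_poly_elt // hornerC normr1 lexx.
Qed.

Lemma T_poly_elt w : disk R w ->
  disk R (symbol w) /\ forall p, T (poly_elt p) w = weight w * p.[symbol w].
Proof.
move=> w1; pose L p := T (poly_elt p) w / weight w.
have weight_w := weight_neq0 w w1.
have L_linear : linear L.
  move=> a p q; rewrite /L -[a *: (_ / _)]/(a * _) mulrA -mulrDl -T_lin //.
  congr (T _ w / _).
  apply/esym/poly_eltE => z z1.
  by rewrite emb_lin // !emb_poly_elt // hornerD hornerZ.
have L1 : L 1 = 1 by rewrite /L divff.
have L_neq0 g : Y (poly_elt g) -> L g != 0.
  by move=> Yg; rewrite mulf_neq0 ?invr_eq0 // (T_nonvanish _ Yg).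
have L_Hinf p : Hinf_invertible p -> L p != 0.
  move=> [m [M [m0 mM]]]; apply: L_neq0; apply: Y1; exists m, M.
  by split=> // z z1; rewrite emb_poly_elt //; apply: mM.
have L_circle l : `|l| = 1 -> L ('X - l%:P) != 0.
  move=> l1; apply: L_neq0; apply: (Y2 _ l1) => z z1.
  by rewrite emb_poly_elt ?hornerXsubC.
split=> [|p]; first exact: normr_LX_lt1 L_linear L1 L_Hinf L_circle.
by rewrite -(L_horner L_linear L1 L_Hinf) /L mulrC divfK.
Qed.

Lemma T_weighted_composition w f : disk R w ->
  T f w = weight w * emb f (symbol w).
Proof.
move=> w1; have [symbol_w T_poly] := T_poly_elt w w1.
apply: (eq_continuous_dense (f := fun f => T f w)
  (g := fun f => weight w * emb f (symbol w)) _ _ X2b).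
- exact: continuous_to_Hol_eval.
- move=> g; apply: (continuousM (s := cst (weight w))); first exact: cvg_cst.
  exact: X1.
- by move=> x [p xp]; rewrite (poly_eltE xp) T_poly emb_poly_elt.
Qed.

End WeightedComposition.

Theorem corollary7p2 (R : realType)
  (* X is a Banach space over C which is (linearly, injectively) a subspace
     of Hol(D): x : X is the holomorphic function emb x *)
  (X : completeNormedModType (CC R)) (emb : X -> CC R -> CC R)
  (emb_holo : forall x : X, holo_on_disk (emb x))
  (emb_lin : forall (a : CC R) (x y : X) (z : CC R), disk R z ->
     emb (a *: x + y) z = a * emb x z + emb y z)
  (emb_inj : forall x y : X,
     (forall z, disk R z -> emb x z = emb y z) -> x = y)
  (* (X1) point evaluations are continuous on X *)
  (X1 : forall w : CC R, disk R w -> continuous (fun x : X => emb x w))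
  (* (X2) X contains the polynomials, and they are dense in X *)
  (X2a : forall p : {poly CC R}, exists x : X,
     forall z, disk R z -> emb x z = p.[z])
  (X2b : closure [set x : X | exists p : {poly CC R},
     forall z, disk R z -> emb x z = p.[z]] = setT)
  (* (X3) f in X implies z f in X *)
  (X3 : forall x : X, exists y : X,
     forall z, disk R z -> emb y z = z * emb x z)
  (Y : set X)
  (* (Y1) 0 < inf_D |g| <= sup_D |g| < oo implies g in Y *)
  (Y1 : forall g : X,
     (exists m M : CC R, 0 < m /\
        forall z, disk R z -> m <= `|emb g z| <= M) -> Y g)
  (* (Y2) z - lambda belongs to Y for every lambda in T *)
  (Y2 : forall lambda : CC R, circle R lambda -> forall g : X,
     (forall z, disk R z -> emb g z = z - lambda) -> Y g)
  (* T : X -> Hol(D) continuous linear, Tg zero-free on D for g in Y *)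
  (T : X -> CC R -> CC R)
  (T_holo : forall x : X, holo_on_disk (T x))
  (T_lin : forall (a : CC R) (x y : X) (z : CC R), disk R z ->
     T (a *: x + y) z = a * T x z + T y z)
  (T_cont : continuous_to_Hol T)
  (T_nonvanish : forall g : X, Y g -> forall z, disk R z -> T g z != 0) :
  exists phi psi : CC R -> CC R,
    [/\ holo_on_disk phi, (forall z, disk R z -> disk R (phi z)),
        holo_on_disk psi, (forall z, disk R z -> psi z != 0) &
        forall (f : X) (z : CC R), disk R z -> T f z = psi z * emb f (phi z)].
Proof.
have psi_neq0 := weight_neq0 X2a Y1 T_nonvanish.
have T_poly := T_poly_elt emb_lin emb_inj X2a Y1 Y2 T_lin T_nonvanish.
have T_wcomp := T_weighted_composition emb_lin emb_inj X1 X2a X2b Y1 Y2 T_lin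
  T_cont T_nonvanish.
exists (symbol X2a (T := T)), (weight X2a (T := T)); split.
- move=> w w1; apply: derivableM (T_holo _ w w1) _.
  exact: derivableV (psi_neq0 w w1) (T_holo _ w w1).
- by move=> w /T_poly [].
- by move=> w; apply: T_holo.
- exact: psi_neq0.
- by move=> f w; apply: T_wcomp.
Qed.
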